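(* Let $f:(\mathbb R^2,q)\to(\mathbb R^3,p)$ be a smooth germ with a corank 1 singularity at $q$ whose curvature parabola $\Delta_p$ is a non-degenerate parabola or a half-line, let $(u,v)$ be a coordinate system with $f_u(q)\ne0$ and $f_v(q)=0$, and let $E=\langle f_u,f_u\rangle$, $F=\langle f_u,f_v\rangle$, $G=\langle f_v,f_v\rangle$ be the coefficients of the first fundamental form. Then, evaluating at $q$, $$\kappa_a(p)=\frac{\big(\frac{E_u}{2}F_v-E(F_{uv}-\frac{E_{vv}}{2})\big)\big(F_v^2-E\frac{G_{vv}}{2}\big)-\big(\frac{E_v}{2}F_v-E\frac{G_{uv}}{2}\big)^2}{\Big(E\big(E\frac{G_{vv}}{2}-F_v^2\big)\Big)^{3/2}},$$ where subscripts denote partial derivatives.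
   Context: $T_pM=\operatorname{im}df_q$, $N_pM$ its orthogonal complement with a fixed orientation. First fundamental form $I(X,Y)=\langle df_qX,df_qY\rangle$; second fundamental form $II$: the symmetric bilinear map $T_q\mathbb R^2\times T_q\mathbb R^2\to N_pM$ with $II(\partial_u,\partial_u)=f_{uu}(q)^\perp$, $II(\partial_u,\partial_v)=f_{uv}(q)^\perp$, $II(\partial_v,\partial_v)=f_{vv}(q)^\perp$ ($\perp$ = orthogonal projection to $N_pM$). Curvature parabola $\Delta_p=\{II(X,X): I(X,X)=1\}\subset N_pM$. Axial vector $v_a$: if $\Delta_p$ is a non-degenerate parabola, the unit vector along its axis of symmetry pointing to its interior; if $\Delta_p$ is a half-line, the unit vector in the direction in which the half-line extends. Axial curvature $\kappa_a(p)=\min\{\langle II(X,X),v_a\rangle: I(X,X)=1\}$. *)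

From Stdlib Require Import Reals ClassicalEpsilon List.
From Coquelicot Require Import Coquelicot.
Open Scope R_scope.

Definition R3 := (R * R * R)%type.
Definition mk3 (x y z : R) : R3 := (x, y, z).
Definition c1 (w : R3) : R := fst (fst w).
Definition c2 (w : R3) : R := snd (fst w).
Definition c3 (w : R3) : R := snd w.
Definition vzero : R3 := mk3 0 0 0.
Definition vadd (x y : R3) : R3 := mk3 (c1 x + c1 y) (c2 x + c2 y) (c3 x + c3 y).
Definition vscal (a : R) (x : R3) : R3 := mk3 (a * c1 x) (a * c2 x) (a * c3 x).
Definition vsub (x y : R3) : R3 := vadd x (vscal (-1) y).
Definition dot (x y : R3) : R := c1 x * c1 y + c2 x * c2 y + c3 x * c3 y.

Definition pu (g : R -> R -> R) : R -> R -> R := fun u v => Derive (fun t => g t v) u.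
Definition pv (g : R -> R -> R) : R -> R -> R := fun u v => Derive (fun t => g u t) v.

(** iterated partial derivative along a word of directions (true = u, false = v) *)
Fixpoint pd (s : list bool) (g : R -> R -> R) : R -> R -> R :=
  match s with
  | nil => g
  | b :: s' => (if b then pu else pv) (pd s' g)
  end.

Definition smooth2 (g : R -> R -> R) : Prop :=
  forall (s : list bool) (u v : R),
    continuous (fun p : R * R => pd s g (fst p) (snd p)) (u, v) /\
    ex_derive (fun t => pd s g t v) u /\
    ex_derive (fun t => pd s g u t) v.

Definition smooth_map (f : R -> R -> R3) : Prop :=
  smooth2 (fun u v => c1 (f u v)) /\ smooth2 (fun u v => c2 (f u v)) /\
  smooth2 (fun u v => c3 (f u v)).

Definition Vpu (f : R -> R -> R3) : R -> R -> R3 := fun u v =>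
  mk3 (pu (fun a b => c1 (f a b)) u v) (pu (fun a b => c2 (f a b)) u v)
      (pu (fun a b => c3 (f a b)) u v).
Definition Vpv (f : R -> R -> R3) : R -> R -> R3 := fun u v =>
  mk3 (pv (fun a b => c1 (f a b)) u v) (pv (fun a b => c2 (f a b)) u v)
      (pv (fun a b => c3 (f a b)) u v).

Definition EE (f : R -> R -> R3) : R -> R -> R := fun u v => dot (Vpu f u v) (Vpu f u v).
Definition FF (f : R -> R -> R3) : R -> R -> R := fun u v => dot (Vpu f u v) (Vpv f u v).
Definition GG (f : R -> R -> R3) : R -> R -> R := fun u v => dot (Vpv f u v) (Vpv f u v).

Definition dfq (f : R -> R -> R3) (u0 v0 a b : R) : R3 :=
  vadd (vscal a (Vpu f u0 v0)) (vscal b (Vpv f u0 v0)).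

Definition corank1_at (f : R -> R -> R3) (u0 v0 : R) : Prop :=
  (exists a b, dfq f u0 v0 a b <> vzero) /\
  (exists a b, (a <> 0 \/ b <> 0) /\ dfq f u0 v0 a b = vzero).

Definition tangent_space (f : R -> R -> R3) (u0 v0 : R) : R3 -> Prop :=
  fun t => exists a b, t = dfq f u0 v0 a b.

Definition is_normal_proj (T : R3 -> Prop) (w n : R3) : Prop :=
  (forall t, T t -> dot n t = 0) /\ T (vsub w n).

Definition nproj (T : R3 -> Prop) (w : R3) : R3 :=
  epsilon (inhabits vzero) (is_normal_proj T w).

Definition first_ff (f : R -> R -> R3) (u0 v0 a b : R) : R :=
  dot (dfq f u0 v0 a b) (dfq f u0 v0 a b).

Definition second_ff (f : R -> R -> R3) (u0 v0 a b : R) : R3 :=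
  let T := tangent_space f u0 v0 in
  let IIuu := nproj T (Vpu (Vpu f) u0 v0) in
  let IIuv := nproj T (Vpv (Vpu f) u0 v0) in
  let IIvv := nproj T (Vpv (Vpv f) u0 v0) in
  vadd (vadd (vscal (a ^ 2) IIuu) (vscal (2 * a * b) IIuv)) (vscal (b ^ 2) IIvv).

Definition curv_parabola (f : R -> R -> R3) (u0 v0 : R) : R3 -> Prop :=
  fun n => exists a b, first_ff f u0 v0 a b = 1 /\ n = second_ff f u0 v0 a b.

(** D is a non-degenerate parabola with axis direction va pointing to its interior:
    D = { V + s e1 + alpha s^2 va | s in R }, alpha > 0, (e1, va) orthonormal *)
Definition parabola_axis (D : R3 -> Prop) (va : R3) : Prop :=
  exists (V e1 : R3) (alpha : R),
    0 < alpha /\ dot e1 e1 = 1 /\ dot va va = 1 /\ dot e1 va = 0 /\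
    forall n, D n <-> exists s, n = vadd (vadd V (vscal s e1)) (vscal (alpha * s ^ 2) va).

Definition halfline_dir (D : R3 -> Prop) (va : R3) : Prop :=
  exists V : R3, dot va va = 1 /\
    forall n, D n <-> exists t, 0 <= t /\ n = vadd V (vscal t va).

Definition is_nondeg_parabola (D : R3 -> Prop) : Prop := exists va, parabola_axis D va.
Definition is_halfline (D : R3 -> Prop) : Prop := exists va, halfline_dir D va.

Definition axial_vector (D : R3 -> Prop) (va : R3) : Prop :=
  parabola_axis D va \/ halfline_dir D va.

Definition is_min (S : R -> Prop) (m : R) : Prop := S m /\ forall x, S x -> m <= x.

(** the set { <II(X,X), va> : I(X,X) = 1 } whose minimum is kappa_a(p) *)
Definition axial_values (f : R -> R -> R3) (u0 v0 : R) (va : R3) : R -> Prop :=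
  fun r => exists a b, first_ff f u0 v0 a b = 1 /\ r = dot (second_ff f u0 v0 a b) va.

(* Since f_v(q) = 0, the tangent plane T_pM is the line spanned by f_u, so
   I(X,X) = a^2 E for X = a d/du + b d/dv and II(X,X) = a^2 M + 2ab U + b^2 W,
   where M, U, W are the components of f_uu, f_uv, f_vv orthogonal to f_u.
   The curvature parabola is therefore the curve t |-> II at (1/sqrt E, t),
   and its t^2-coefficient W, a second difference of points of the curve, lies
   in the plane (resp. line) carrying the parabola (resp. half-line); comparing coefficients shows W = w v_a with
   w > 0.  Then <II(X,X), v_a> = A/E + 2 b B/sqrt E + b^2 w with A = <M,v_a>,
   B = <U,v_a>, whose minimum over b is (A w - B^2)/(E w).  Finally, at q the
   product rule and Schwarz's theorem give E_u/2 = <f_uu,f_u>,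
   F_uv - E_vv/2 = <f_uu,f_vv>, G_vv/2 = |f_vv|^2, etc., and the Gram identity
   for the orthogonal part turns the stated expression into (A w - B^2)/(E w). *)

From Stdlib Require Import Reals Lra Psatz FunctionalExtensionality ClassicalEpsilon.
From Coquelicot Require Import Coquelicot.
Open Scope R_scope.

Lemma R3_ext (x y : R3) : c1 x = c1 y -> c2 x = c2 y -> c3 x = c3 y -> x = y.
Proof. destruct x as [[? ?] ?], y as [[? ?] ?]; cbv; intros -> -> ->; reflexivity. Qed.

Ltac R3_componentwise :=
  apply R3_ext; unfold vsub, vadd, vscal, vzero, mk3, c1, c2, c3; simpl.

Lemma dot_comm x y : dot x y = dot y x.
Proof. unfold dot; ring. Qed.

Lemma dot_vadd_l x y z : dot (vadd x y) z = dot x z + dot y z.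
Proof. unfold dot, vadd, mk3, c1, c2, c3; simpl; ring. Qed.

Lemma dot_vscal_l a x z : dot (vscal a x) z = a * dot x z.
Proof. unfold dot, vscal, mk3, c1, c2, c3; simpl; ring. Qed.

Lemma dot_vscal_r a x z : dot x (vscal a z) = a * dot x z.
Proof. unfold dot, vscal, mk3, c1, c2, c3; simpl; ring. Qed.

Lemma dot_vsub_l x y z : dot (vsub x y) z = dot x z - dot y z.
Proof. unfold dot, vsub, vadd, vscal, mk3, c1, c2, c3; simpl; ring. Qed.

Lemma dot_vzero_l x : dot vzero x = 0.
Proof. unfold dot, vzero, mk3, c1, c2, c3; simpl; ring. Qed.

Lemma dot_vzero_r x : dot x vzero = 0.
Proof. unfold dot, vzero, mk3, c1, c2, c3; simpl; ring. Qed.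

Lemma dot_self_pos x : x <> vzero -> 0 < dot x x.
Proof.
  destruct x as [[x1 x2] x3]; unfold dot, vzero, mk3, c1, c2, c3; simpl; intro Hx.
  destruct (Req_dec x1 0), (Req_dec x2 0), (Req_dec x3 0); subst; try nra.
  now contradiction Hx.
Qed.

Definition ex_derive3 (x : R -> R3) (t : R) : Prop :=
  ex_derive (fun s => c1 (x s)) t /\ ex_derive (fun s => c2 (x s)) t /\
  ex_derive (fun s => c3 (x s)) t.

Definition Derive3 (x : R -> R3) (t : R) : R3 :=
  mk3 (Derive (fun s => c1 (x s)) t) (Derive (fun s => c2 (x s)) t)
      (Derive (fun s => c3 (x s)) t).

Lemma ex_derive_dot (x y : R -> R3) t :
  ex_derive3 x t -> ex_derive3 y t -> ex_derive (fun s => dot (x s) (y s)) t.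
Proof.
  intros (x1 & x2 & x3) (y1 & y2 & y3); unfold dot.
  apply (ex_derive_plus (fun s => c1 (x s) * c1 (y s) + c2 (x s) * c2 (y s))
           (fun s => c3 (x s) * c3 (y s)));
    [apply (ex_derive_plus (fun s => c1 (x s) * c1 (y s)) (fun s => c2 (x s) * c2 (y s))) |];
    now apply ex_derive_mult.
Qed.

Lemma Derive_dot (x y : R -> R3) t : ex_derive3 x t -> ex_derive3 y t ->
  Derive (fun s => dot (x s) (y s)) t = dot (Derive3 x t) (y t) + dot (x t) (Derive3 y t).
Proof.
  intros (x1 & x2 & x3) (y1 & y2 & y3); unfold dot at 1.
  rewrite !Derive_plus, !Derive_mult; auto using ex_derive_plus, ex_derive_mult.
  unfold dot, Derive3, mk3, c1, c2, c3; simpl; ring.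
Qed.

Lemma smooth2_pd (s : list bool) g : smooth2 g -> smooth2 (pd s g).
Proof.
  intros Hg s' u v.
  replace (pd s' (pd s g)) with (pd (s' ++ s) g) by (induction s'; simpl; congruence).
  apply Hg.
Qed.

Lemma smooth_map_Vpu X : smooth_map X -> smooth_map (Vpu X).
Proof.
  intros (H1 & H2 & H3).
  exact (conj (smooth2_pd (true :: nil) _ H1)
           (conj (smooth2_pd (true :: nil) _ H2) (smooth2_pd (true :: nil) _ H3))).
Qed.

Lemma smooth_map_Vpv X : smooth_map X -> smooth_map (Vpv X).
Proof.
  intros (H1 & H2 & H3).
  exact (conj (smooth2_pd (false :: nil) _ H1)
           (conj (smooth2_pd (false :: nil) _ H2) (smooth2_pd (false :: nil) _ H3))).
Qed.

Lemma smooth_map_ex_derive3_u X u v : smooth_map X -> ex_derive3 (fun t => X t v) u.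
Proof.
  intros (H1 & H2 & H3).
  exact (conj (proj1 (proj2 (H1 nil u v)))
           (conj (proj1 (proj2 (H2 nil u v))) (proj1 (proj2 (H3 nil u v))))).
Qed.

Lemma smooth_map_ex_derive3_v X u v : smooth_map X -> ex_derive3 (fun t => X u t) v.
Proof.
  intros (H1 & H2 & H3).
  exact (conj (proj2 (proj2 (H1 nil u v)))
           (conj (proj2 (proj2 (H2 nil u v))) (proj2 (proj2 (H3 nil u v))))).
Qed.

Lemma pu_dot X Y : smooth_map X -> smooth_map Y ->
  pu (fun u v => dot (X u v) (Y u v))
  = fun u v => dot (Vpu X u v) (Y u v) + dot (X u v) (Vpu Y u v).
Proof.
  intros HX HY; apply functional_extensionality; intro u;
    apply functional_extensionality; intro v.
  apply Derive_dot; now apply smooth_map_ex_derive3_u.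
Qed.

Lemma pv_dot X Y : smooth_map X -> smooth_map Y ->
  pv (fun u v => dot (X u v) (Y u v))
  = fun u v => dot (Vpv X u v) (Y u v) + dot (X u v) (Vpv Y u v).
Proof.
  intros HX HY; apply functional_extensionality; intro u;
    apply functional_extensionality; intro v.
  apply Derive_dot; now apply smooth_map_ex_derive3_v.
Qed.

Lemma pv_dot_plus_dot X Y Z W u v :
  smooth_map X -> smooth_map Y -> smooth_map Z -> smooth_map W ->
  pv (fun a b => dot (X a b) (Y a b) + dot (Z a b) (W a b)) u v
  = dot (Vpv X u v) (Y u v) + dot (X u v) (Vpv Y u v)
    + (dot (Vpv Z u v) (W u v) + dot (Z u v) (Vpv W u v)).
Proof.
  intros HX HY HZ HW; unfold pv.
  rewrite Derive_plus by (apply ex_derive_dot; now apply smooth_map_ex_derive3_v).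
  rewrite !Derive_dot by now apply smooth_map_ex_derive3_v.
  reflexivity.
Qed.

Lemma pu_pv_comm g : smooth2 g -> pu (pv g) = pv (pu g).
Proof.
  intro Hg; apply functional_extensionality; intro x;
    apply functional_extensionality; intro y.
  apply Schwarz.
  - exists (mkposreal 1 Rlt_0_1); intros u v _ _.
    repeat split.
    + exact (proj1 (proj2 (Hg nil u v))).
    + exact (proj2 (proj2 (Hg nil u v))).
    + exact (proj1 (proj2 (Hg (false :: nil)%list u v))).
    + exact (proj2 (proj2 (Hg (true :: nil)%list u v))).
  - apply continuity_2d_pt_filterlim; exact (proj1 (Hg (true :: false :: nil)%list x y)).
  - apply continuity_2d_pt_filterlim; exact (proj1 (Hg (false :: true :: nil)%list x y)).
Qed.

Lemma Vpu_Vpv f : smooth_map f -> Vpu (Vpv f) = Vpv (Vpu f).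
Proof.
  intros (H1 & H2 & H3); apply functional_extensionality; intro u;
    apply functional_extensionality; intro v.
  unfold Vpu at 1, Vpv at 2; cbn.
  now rewrite !pu_pv_comm.
Qed.

Section FirstFundamentalFormDerivatives.

Variable f : R -> R -> R3.
Hypothesis Hf : smooth_map f.

Let Hsu : smooth_map (Vpu f) := smooth_map_Vpu f Hf.
Let Hsv : smooth_map (Vpv f) := smooth_map_Vpv f Hf.
Let Hsuu : smooth_map (Vpu (Vpu f)) := smooth_map_Vpu _ Hsu.
Let Hsuv : smooth_map (Vpv (Vpu f)) := smooth_map_Vpv _ Hsu.
Let Hsvv : smooth_map (Vpv (Vpv f)) := smooth_map_Vpv _ Hsv.

Lemma pu_EE u v : pu (EE f) u v / 2 = dot (Vpu (Vpu f) u v) (Vpu f u v).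
Proof. unfold EE; rewrite pu_dot by assumption; rewrite (dot_comm (Vpu f u v)); field. Qed.

Lemma pv_EE u v : pv (EE f) u v / 2 = dot (Vpv (Vpu f) u v) (Vpu f u v).
Proof. unfold EE; rewrite pv_dot by assumption; rewrite (dot_comm (Vpu f u v)); field. Qed.

Variables u0 v0 : R.
Hypothesis Hfv : Vpv f u0 v0 = vzero.

Lemma pv_FF : pv (FF f) u0 v0 = dot (Vpu f u0 v0) (Vpv (Vpv f) u0 v0).
Proof. unfold FF; rewrite pv_dot, Hfv, dot_vzero_r by assumption; ring. Qed.

Lemma pv_pv_GG : pv (pv (GG f)) u0 v0 / 2 = dot (Vpv (Vpv f) u0 v0) (Vpv (Vpv f) u0 v0).
Proof.
  unfold GG; rewrite pv_dot, pv_dot_plus_dot by assumption.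
  rewrite Hfv, dot_vzero_l, dot_vzero_r; field.
Qed.

Lemma pv_pu_GG : pv (pu (GG f)) u0 v0 / 2 = dot (Vpv (Vpu f) u0 v0) (Vpv (Vpv f) u0 v0).
Proof.
  unfold GG; rewrite pu_dot, Vpu_Vpv, pv_dot_plus_dot by assumption.
  rewrite Hfv, dot_vzero_l, dot_vzero_r, (dot_comm (Vpv (Vpv f) u0 v0)); field.
Qed.

Lemma pv_pu_FF_sub_pv_pv_EE :
  pv (pu (FF f)) u0 v0 - pv (pv (EE f)) u0 v0 / 2
  = dot (Vpu (Vpu f) u0 v0) (Vpv (Vpv f) u0 v0).
Proof.
  unfold FF, EE; rewrite pu_dot, pv_dot, Vpu_Vpv, !pv_dot_plus_dot by assumption.
  rewrite Hfv, !dot_vzero_r, (dot_comm (Vpu f u0 v0)); field.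
Qed.

End FirstFundamentalFormDerivatives.

Definition perp_part (a w : R3) : R3 := vsub w (vscal (dot w a / dot a a) a).

Lemma dot_perp_part a x y : 0 < dot a a ->
  dot (perp_part a x) (perp_part a y) = dot x y - dot x a * dot y a / dot a a.
Proof.
  intro Ha; destruct a as [[a1 a2] a3], x as [[x1 x2] x3], y as [[y1 y2] y3].
  unfold perp_part, dot, vsub, vadd, vscal, mk3, c1, c2, c3 in *; simpl in *.
  field; lra.
Qed.

Lemma is_normal_proj_span (T : R3 -> Prop) a w n : 0 < dot a a ->
  (forall t, T t <-> exists l, t = vscal l a) ->
  is_normal_proj T w n <-> n = perp_part a w.
Proof.
  intros Ha HT; split.
  - intros [Hn Hwn].
    destruct (proj1 (HT _) Hwn) as [l Hl].
    assert (Hna : dot n a = 0) by (apply Hn, HT; exists 1; R3_componentwise; ring).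
    assert (Hla : l = dot w a / dot a a).
    { assert (H := f_equal (fun z => dot z a) Hl); simpl in H.
      rewrite dot_vsub_l, Hna, dot_vscal_l in H.
      field_simplify_eq; lra. }
    unfold perp_part; rewrite <- Hla, <- Hl; R3_componentwise; ring.
  - intros ->; split.
    + intros t Ht; destruct (proj1 (HT t) Ht) as [l ->].
      unfold perp_part; rewrite dot_vsub_l, !dot_vscal_l, !dot_vscal_r; field; lra.
    + apply HT; exists (dot w a / dot a a); unfold perp_part; R3_componentwise; ring.
Qed.

Lemma nproj_span (T : R3 -> Prop) a w : 0 < dot a a ->
  (forall t, T t <-> exists l, t = vscal l a) ->
  nproj T w = perp_part a w.
Proof.
  intros Ha HT; apply (is_normal_proj_span T a w _ Ha HT).
  unfold nproj; apply epsilon_spec; exists (perp_part a w).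
  now apply (is_normal_proj_span T a w _ Ha HT).
Qed.

Lemma inv_sqrt_sq E : 0 < E -> (/ sqrt E) ^ 2 = / E.
Proof. intro HE; rewrite pow_inv, <- Rsqr_pow2, Rsqr_sqrt; lra. Qed.

Definition quad_form (M U W : R3) (a b : R) : R3 :=
  vadd (vadd (vscal (a ^ 2) M) (vscal (2 * a * b) U)) (vscal (b ^ 2) W).

Lemma dot_quad_form M U W a b y :
  dot (quad_form M U W a b) y = a ^ 2 * dot M y + 2 * a * b * dot U y + b ^ 2 * dot W y.
Proof. unfold quad_form; rewrite !dot_vadd_l, !dot_vscal_l; ring. Qed.

Lemma quad_form_opp M U W a b : quad_form M U W (- a) b = quad_form M U W a (- b).
Proof. unfold quad_form; R3_componentwise; ring. Qed.

Lemma quad_form_second_difference M U W a :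
  vscal 2 W = vsub (vadd (quad_form M U W a 1) (quad_form M U W a (-1)))
                   (vscal 2 (quad_form M U W a 0)).
Proof. unfold quad_form; R3_componentwise; ring. Qed.

Lemma quad_form_level_set E M U W n : 0 < E ->
  (exists a b, a ^ 2 * E = 1 /\ n = quad_form M U W a b)
  <-> exists t, n = quad_form M U W (/ sqrt E) t.
Proof.
  intro HE; split.
  - intros (a & b & Ha & ->).
    assert (Ha2 : a ^ 2 = (/ sqrt E) ^ 2).
    { rewrite inv_sqrt_sq by exact HE. field_simplify_eq; lra. }
    rewrite <- !Rsqr_pow2 in Ha2; destruct (Rsqr_eq _ _ Ha2) as [-> | ->].
    + now exists b.
    + exists (- b); apply quad_form_opp.
  - intros [t ->]; exists (/ sqrt E), t; split; [| reflexivity].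
    rewrite inv_sqrt_sq by exact HE; field; lra.
Qed.

Lemma square_of_quadratic_coeffs al p0 p1 p2 q0 q1 q2 : al <> 0 ->
  (forall t, al * (p0 + p1 * t + p2 * t ^ 2) ^ 2 = q0 + q1 * t + q2 * t ^ 2) ->
  p2 = 0 /\ q2 = al * p1 ^ 2.
Proof.
  intros Hal H.
  pose proof (H (-2)); pose proof (H (-1)); pose proof (H 0); pose proof (H 1); pose proof (H 2).
  assert (Hp2 : al * p2 ^ 2 = 0) by lra.
  assert (p2 = 0).
  { destruct (Rmult_integral _ _ Hp2) as [| Hz]; [contradiction | nra]. }
  split; [assumption | subst p2; lra].
Qed.

Lemma nonneg_quadratic_onto_pos r0 r1 r2 :
  (forall t, 0 <= r0 + r1 * t + r2 * t ^ 2) ->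
  (forall s, 0 <= s -> exists t, r0 + r1 * t + r2 * t ^ 2 = s) ->
  0 < r2.
Proof.
  intros Hpos Honto.
  destruct (Rtotal_order r2 0) as [Hneg | [Hz | Hp]]; [exfalso | exfalso | exact Hp].
  - destruct (Honto (r0 + r1 ^ 2 / - r2 + 1)) as [t Ht].
    { specialize (Hpos 0); assert (0 <= r1 ^ 2 / - r2) by (apply Rdiv_le_0_compat; nra).
      lra. }
    assert (Hscaled : - r2 * (r1 * t + r2 * t ^ 2) = r1 ^ 2 - r2).
    { replace (r1 * t + r2 * t ^ 2) with (r1 ^ 2 / - r2 + 1) by lra; field; lra. }
    nra.
  - subst r2.
    destruct (Honto (r0 + 1)) as [t Ht]; [specialize (Hpos 0); lra |].
    assert (Hr1 : r1 <> 0) by (intros ->; lra).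
    specialize (Hpos (- (r0 + 1) / r1)).
    replace (r0 + r1 * (- (r0 + 1) / r1) + 0 * (- (r0 + 1) / r1) ^ 2) with (-1) in Hpos
      by (field; exact Hr1).
    lra.
Qed.

Lemma quad_form_coeff_in_plane M U W a V e d :
  (forall t, exists x y, quad_form M U W a t = vadd (vadd V (vscal x e)) (vscal y d)) ->
  exists x y, W = vadd (vscal x e) (vscal y d).
Proof.
  intro H.
  destruct (H 1) as (x1 & y1 & H1), (H (-1)) as (x2 & y2 & H2), (H 0) as (x0 & y0 & H0).
  exists ((x1 + x2) / 2 - x0), ((y1 + y2) / 2 - y0).
  replace W with (vscal (/ 2) (vscal 2 W)) by (R3_componentwise; field).
  rewrite (quad_form_second_difference M U W a), H1, H2, H0.
  R3_componentwise; field.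
Qed.

Lemma dot_parabola_point V e1 va al s :
  dot e1 e1 = 1 -> dot va va = 1 -> dot e1 va = 0 ->
  let n := vadd (vadd V (vscal s e1)) (vscal (al * s ^ 2) va) in
  dot n e1 = dot V e1 + s /\ dot n va = dot V va + al * s ^ 2.
Proof.
  intros He1 Hva He1va n; unfold n.
  rewrite !dot_vadd_l, !dot_vscal_l, (dot_comm va e1), He1, He1va, Hva; split; ring.
Qed.

Lemma parabola_axis_quad_form (D : R3 -> Prop) M U W a va :
  (forall n, D n <-> exists t, n = quad_form M U W a t) ->
  parabola_axis D va -> exists w, 0 < w /\ W = vscal w va.
Proof.
  intros HD (V & e1 & al & Hal & He1 & Hva & He1va & HP).
  pose proof (dot_parabola_point V e1 va al) as Hpt; cbv zeta in Hpt.
  assert (Hmem : forall t, exists s,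
             quad_form M U W a t = vadd (vadd V (vscal s e1)) (vscal (al * s ^ 2) va)).
  { intro t; apply HP, HD; now exists t. }
  (* The e1- and va-coordinates of the curve are quadratic in t and related by
     the equation of the parabola. *)
  assert (Hsq : forall t,
    al * ((a ^ 2 * dot M e1 - dot V e1) + 2 * a * dot U e1 * t + dot W e1 * t ^ 2) ^ 2
    = (a ^ 2 * dot M va - dot V va) + 2 * a * dot U va * t + dot W va * t ^ 2).
  { intro t; destruct (Hmem t) as [s Hs].
    destruct (Hpt s He1 Hva He1va) as [Hs1 Hs2]; rewrite <- Hs, dot_quad_form in Hs1, Hs2.
    replace ((a ^ 2 * dot M e1 - dot V e1) + 2 * a * dot U e1 * t + dot W e1 * t ^ 2)
      with s by lra.
    lra. }
  destruct (square_of_quadratic_coeffs _ _ _ _ _ _ _ (Rgt_not_eq _ _ Hal) Hsq) as [HWe1 HWva].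
  assert (HUe1 : 2 * a * dot U e1 <> 0).
  { intro Hz; set (s := a ^ 2 * dot M e1 - dot V e1 + 1).
    destruct (proj1 (HD (vadd (vadd V (vscal s e1)) (vscal (al * s ^ 2) va))))
      as [t Ht]; [apply HP; now exists s |].
    destruct (Hpt s He1 Hva He1va) as [Hs _]; rewrite Ht, dot_quad_form, HWe1 in Hs.
    replace (2 * a * t * dot U e1) with (t * (2 * a * dot U e1)) in Hs by ring.
    rewrite Hz in Hs; unfold s in Hs; lra. }
  destruct (quad_form_coeff_in_plane M U W a V e1 va) as (x & y & HW).
  { intro t; destruct (Hmem t) as [s Hs]; now exists s, (al * s ^ 2). }
  assert (Hx : x = 0).
  { rewrite <- HWe1, HW, dot_vadd_l, !dot_vscal_l, (dot_comm va e1), He1, He1va; ring. }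
  exists (dot W va); split.
  - rewrite HWva; apply Rmult_lt_0_compat; [exact Hal | now apply pow2_gt_0].
  - rewrite HW at 2; rewrite HW, Hx, dot_vadd_l, !dot_vscal_l, He1va, Hva.
    R3_componentwise; ring.
Qed.

Lemma halfline_dir_quad_form (D : R3 -> Prop) M U W a va :
  (forall n, D n <-> exists t, n = quad_form M U W a t) ->
  halfline_dir D va -> exists w, 0 < w /\ W = vscal w va.
Proof.
  intros HD (V & Hva & HL).
  assert (Hpt : forall s, dot (vadd V (vscal s va)) va = dot V va + s).
  { intro s; rewrite dot_vadd_l, dot_vscal_l, Hva; ring. }
  assert (Hmem : forall t, exists s, 0 <= s /\ quad_form M U W a t = vadd V (vscal s va)).
  { intro t; apply HL, HD; now exists t. }
  destruct (quad_form_coeff_in_plane M U W a V va va) as (x & y & HW).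
  { intro t; destruct (Hmem t) as (s & _ & Hs); exists s, 0; rewrite Hs; R3_componentwise; ring. }
  assert (HWva : W = vscal (dot W va) va).
  { rewrite HW at 2; rewrite HW, dot_vadd_l, !dot_vscal_l, Hva; R3_componentwise; ring. }
  exists (dot W va); split; [| exact HWva].
  apply (nonneg_quadratic_onto_pos (a ^ 2 * dot M va - dot V va) (2 * a * dot U va)).
  - intro t; destruct (Hmem t) as (s & Hs0 & Hs).
    pose proof (Hpt s) as Hs'; rewrite <- Hs, dot_quad_form in Hs'; lra.
  - intros s Hs0; destruct (proj1 (HD (vadd V (vscal s va)))) as [t Ht].
    { apply HL; now exists s. }
    exists t; pose proof (Hpt s) as Hs'; rewrite Ht, dot_quad_form in Hs'; lra.
Qed.

Lemma axial_vector_quad_form (D : R3 -> Prop) E M U W va : 0 < E ->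
  (forall n, D n <-> exists a b, a ^ 2 * E = 1 /\ n = quad_form M U W a b) ->
  axial_vector D va -> dot va va = 1 /\ exists w, 0 < w /\ W = vscal w va.
Proof.
  intros HE HD Hax.
  assert (HD' : forall n, D n <-> exists t, n = quad_form M U W (/ sqrt E) t).
  { intro n; rewrite HD; now apply quad_form_level_set. }
  destruct Hax as [Hax | Hax]; split.
  - now destruct Hax as (V & e1 & al & _ & _ & Hva & _).
  - exact (parabola_axis_quad_form D M U W _ va HD' Hax).
  - now destruct Hax as (V & Hva & _).
  - exact (halfline_dir_quad_form D M U W _ va HD' Hax).
Qed.

Lemma is_min_quadratic (S : R -> Prop) E A B w : 0 < E -> 0 < w ->
  (forall r, S r <-> exists a b, a ^ 2 * E = 1 /\ r = a ^ 2 * A + 2 * a * b * B + b ^ 2 * w) ->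
  is_min S ((A * w - B ^ 2) / (E * w)).
Proof.
  intros HE Hw HS; split.
  - set (a := / sqrt E); assert (Ha : a ^ 2 = / E) by now apply inv_sqrt_sq.
    apply HS; exists a, (- a * B / w); split; [rewrite Ha; field; lra |].
    replace (a ^ 2 * A + 2 * a * (- a * B / w) * B + (- a * B / w) ^ 2 * w)
      with (a ^ 2 * (A - B ^ 2 / w)) by (field; lra).
    rewrite Ha; field; lra.
  - intros r Hr; apply HS in Hr; destruct Hr as (a & b & Ha & ->).
    assert (Ha' : a ^ 2 = / E) by (apply (Rmult_eq_reg_r E); [rewrite Ha, Rinv_l |]; lra).
    replace ((A * w - B ^ 2) / (E * w)) with (a ^ 2 * (A - B ^ 2 / w))
      by (rewrite Ha'; field; lra).
    assert (Hgap : a ^ 2 * A + 2 * a * b * B + b ^ 2 * w - a ^ 2 * (A - B ^ 2 / w)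
                   = (a * B + b * w) ^ 2 / w) by (field; lra).
    assert (0 <= (a * B + b * w) ^ 2 / w) by (apply Rdiv_le_0_compat; [apply pow2_ge_0 | lra]).
    lra.
Qed.

Lemma axial_curvature_formula (a x y z va : R3) (w : R) :
  0 < dot a a -> 0 < w -> dot va va = 1 -> perp_part a z = vscal w va ->
  ((dot x a * dot a z - dot a a * dot x z) * (dot a z ^ 2 - dot a a * dot z z)
     - (dot y a * dot a z - dot a a * dot y z) ^ 2)
  / sqrt (dot a a * (dot a a * dot z z - dot a z ^ 2)) ^ 3
  = (dot (perp_part a x) va * w - dot (perp_part a y) va ^ 2) / (dot a a * w).
Proof.
  intros Ha Hw Hva HW.
  (* Each dot product with z is a Gram product with the orthogonal part w va of z. *)
  assert (Hperp : forall p, dot p z = w * dot (perp_part a p) va + dot p a * dot z a / dot a a).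
  { intro p; rewrite <- dot_vscal_r, <- HW, dot_perp_part by exact Ha; field; lra. }
  assert (Hzz : dot z z = w ^ 2 + dot z a ^ 2 / dot a a).
  { rewrite Hperp, HW, dot_vscal_l, Hva; field; lra. }
  rewrite (dot_comm a z), (Hperp x), (Hperp y), Hzz.
  replace (dot a a * (dot a a * (w ^ 2 + dot z a ^ 2 / dot a a) - dot z a ^ 2))
    with ((dot a a * w) ^ 2) by (field; lra).
  rewrite sqrt_pow2 by (apply Rmult_le_pos; lra).
  field; lra.
Qed.

Section VanishingFv.

Variables (f : R -> R -> R3) (u0 v0 : R).
Hypothesis Hfu : Vpu f u0 v0 <> vzero.
Hypothesis Hfv : Vpv f u0 v0 = vzero.

Local Notation fu := (Vpu f u0 v0).
Local Notation M := (perp_part fu (Vpu (Vpu f) u0 v0)).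
Local Notation U := (perp_part fu (Vpv (Vpu f) u0 v0)).
Local Notation W := (perp_part fu (Vpv (Vpv f) u0 v0)).

Lemma tangent_space_fv0 t : tangent_space f u0 v0 t <-> exists l, t = vscal l fu.
Proof.
  unfold tangent_space, dfq; rewrite Hfv; split.
  - intros (a & b & ->); exists a; R3_componentwise; ring.
  - intros [l ->]; exists l, 0; R3_componentwise; ring.
Qed.

Lemma first_ff_fv0 a b : first_ff f u0 v0 a b = a ^ 2 * dot fu fu.
Proof.
  unfold first_ff, dfq; rewrite Hfv.
  unfold dot, vadd, vscal, vzero, mk3, c1, c2, c3; simpl; ring.
Qed.

Lemma second_ff_fv0 a b : second_ff f u0 v0 a b = quad_form M U W a b.
Proof.
  unfold second_ff; rewrite !(nproj_span _ fu) by auto using dot_self_pos, tangent_space_fv0.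
  reflexivity.
Qed.

Lemma curv_parabola_fv0 n :
  curv_parabola f u0 v0 n <-> exists a b, a ^ 2 * dot fu fu = 1 /\ n = quad_form M U W a b.
Proof.
  unfold curv_parabola; setoid_rewrite first_ff_fv0; setoid_rewrite second_ff_fv0.
  reflexivity.
Qed.

Lemma axial_values_fv0 va r :
  axial_values f u0 v0 va r <-> exists a b, a ^ 2 * dot fu fu = 1 /\
    r = a ^ 2 * dot M va + 2 * a * b * dot U va + b ^ 2 * dot W va.
Proof.
  unfold axial_values; setoid_rewrite first_ff_fv0; setoid_rewrite second_ff_fv0.
  setoid_rewrite dot_quad_form; reflexivity.
Qed.

End VanishingFv.

Theorem mainTheorem4 (f : R -> R -> R3) (u0 v0 : R) :
  smooth_map f ->
  corank1_at f u0 v0 ->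
  (is_nondeg_parabola (curv_parabola f u0 v0) \/ is_halfline (curv_parabola f u0 v0)) ->
  Vpu f u0 v0 <> vzero ->
  Vpv f u0 v0 = vzero ->
  forall va : R3, axial_vector (curv_parabola f u0 v0) va ->
  let E := EE f u0 v0 in
  let Eu := pu (EE f) u0 v0 in
  let Ev := pv (EE f) u0 v0 in
  let Evv := pv (pv (EE f)) u0 v0 in
  let Fv := pv (FF f) u0 v0 in
  let Fuv := pv (pu (FF f)) u0 v0 in
  let Guv := pv (pu (GG f)) u0 v0 in
  let Gvv := pv (pv (GG f)) u0 v0 in
  is_min (axial_values f u0 v0 va)
    (((Eu / 2 * Fv - E * (Fuv - Evv / 2)) * (Fv ^ 2 - E * (Gvv / 2))
       - (Ev / 2 * Fv - E * (Guv / 2)) ^ 2)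
     / (sqrt (E * (E * (Gvv / 2) - Fv ^ 2))) ^ 3).
Proof.
  (* The corank-1 and shape hypotheses follow from f_u(q) <> 0, f_v(q) = 0 and the
     existence of the axial vector. *)
  intros Hf _ _ Hfu Hfv va Hax; cbv zeta.
  assert (HE : 0 < dot (Vpu f u0 v0) (Vpu f u0 v0)) by now apply dot_self_pos.
  destruct (axial_vector_quad_form _ _ _ _ _ va HE (curv_parabola_fv0 f u0 v0 Hfu Hfv) Hax)
    as (Hva & w & Hw & HW).
  rewrite pv_pu_FF_sub_pv_pv_EE, pu_EE, pv_EE, pv_FF, pv_pu_GG, pv_pv_GG by assumption.
  change (EE f u0 v0) with (dot (Vpu f u0 v0) (Vpu f u0 v0)).
  rewrite (axial_curvature_formula _ _ _ _ va w) by assumption.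
  apply is_min_quadratic; [exact HE | exact Hw |].
  intro r; rewrite axial_values_fv0, HW, dot_vscal_l, Hva, Rmult_1_r by assumption.
  reflexivity.
Qed.
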